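(* The statistics $(2\text{-}31)$ and $(13\text{-}2)$ are constant on every orbit of $\mathfrak{S}_n$ under the modified Foata–Strehl action.
   Context: For $\pi=a_1\cdots a_n\in\mathfrak{S}_n$: $(2\text{-}31)(\pi)$ is the number of pairs $1\le i<j\le n-1$ with $a_{j+1}<a_i<a_j$, and $(13\text{-}2)(\pi)$ is the number of pairs $2\le i<j\le n$ with $a_{i-1}<a_j<a_i$. Set $a_0=a_{n+1}=n+1$. A letter $a_k$ is a valley if $a_{k-1}>a_k<a_{k+1}$, a peak if $a_{k-1}<a_k>a_{k+1}$, a double ascent if $a_{k-1}<a_k<a_{k+1}$, a double descent if $a_{k-1}>a_k>a_{k+1}$. For $x\in[n]$: if $x$ is a double descent, $\varphi'_x(\pi)$ moves $x$ to between the first pair of consecutive letters $a_i,a_{i+1}$ to the right of $x$ with $a_i<x<a_{i+1}$; if a double ascent, to between the first pair $a_i,a_{i+1}$ to the left of $x$ with $a_i>x>a_{i+1}$; if a peak or valley, $\varphi'_x(\pi)=\pi$. The modified Foata–Strehl action is the $\mathbb{Z}_2^n$-action generated by the commuting involutions $\varphi'_x$, $x\in[n]$. *)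

(* Permutations of [n] are represented as words a_1 ... a_n
   (seq nat) that are rearrangements of 1..n. *)
From mathcomp Require Import all_boot.
Set Implicit Arguments. Unset Strict Implicit. Unset Printing Implicit Defensive.

Definition is_perm (n : nat) (s : seq nat) : bool := perm_eq s (iota 1 n).

(* Scan consecutive pairs (p, y) starting with previous letter p, inserting x
   between the first pair with p < x < y; at the end of the word the right
   letter is the sentinel n+1 (> x), so x is then placed at the end. *)
Fixpoint insR (x p : nat) (r : seq nat) : seq nat :=
  match r with
  | [::] => [:: x]
  | y :: r' => if (p < x) && (x < y) then x :: y :: r' else y :: insR x y r'
  end.

Definition ins_first (x : nat) (q : seq nat) : seq nat :=
  match q with
  | [::] => [:: x]
  | y :: q' => y :: insR x y q'
  end.

(* The modified Foata--Strehl involution phi'_x on a word s, with the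
   convention a_0 = a_{n+1} = n+1 where n = size s. *)
Definition phi' (x : nat) (s : seq nat) : seq nat :=
  let n := size s in
  let k := index x s in
  let l := take k s in
  let r := drop k.+1 s in
  let left := if l is [::] then n.+1 else last 0 l in
  let right := head n.+1 r in
  if (left > x) && (x > right) then
    (* double descent: move x right, into the first pair a_i < x < a_{i+1} *)
    l ++ ins_first x r
  else if (left < x) && (x < right) then
    (* double ascent: move x left, into the first pair a_i > x > a_{i+1}
       (scanning leftwards = scanning the reversed prefix rightwards) *)
    rev (ins_first x (rev l)) ++ r
  else s .

(* Orbits of the Z_2^n-action generated by the involutions phi'_x, x in [n]:
   the group elements are finite products of generators. *)
Inductive fs_orbit (n : nat) : seq nat -> seq nat -> Prop :=
  | fs_refl s : fs_orbit n s s
  | fs_step s t x : 1 <= x <= n -> fs_orbit n s t -> fs_orbit n s (phi' x t).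

(* (2-31)(pi): pairs 1 <= i < j <= n-1 with a_{j+1} < a_i < a_j
   (0-based indices below). *)
Definition stat_2_31 (s : seq nat) : nat :=
  \sum_(j < size s) \sum_(i < j)
     ((j.+1 < size s) && (nth 0 s j.+1 < nth 0 s i) && (nth 0 s i < nth 0 s j)).

(* (13-2)(pi): pairs 2 <= i < j <= n with a_{i-1} < a_j < a_i
   (0-based indices below). *)
Definition stat_13_2 (s : seq nat) : nat :=
  \sum_(j < size s) \sum_(i < j)
     ((0 < i) && (nth 0 s i.-1 < nth 0 s j) && (nth 0 s j < nth 0 s i)).

From mathcomp Require Import all_boot zify.
Set Implicit Arguments. Unset Strict Implicit. Unset Printing Implicit Defensive.

(* A double descent x is moved by phi'_x rightwards across the block U of
   smaller letters that follows it, up to the next larger letter; a double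
   ascent undergoes the inverse move.  For such a slide L x U W -> L U x W the
   only occurrences of 13-2 that change are those of the ascent (u, w) at the
   end of U, which become those of (u, x) and (x, w); these count the same
   letters of W because x is not one of them.  Since 2-31 of a word is 13-2 of
   its reversal, and the reversal of a slide is again a slide, both statistics
   are invariant. *)

Definition inside (a b : nat) : pred nat := fun v => a < v < b.

Lemma count_inside0 a b s : b <= a -> count (inside a b) s = 0.
Proof.
move=> hba; apply/eqP; rewrite -leqn0 leqNgt -has_count.
by apply/hasPn => v _; rewrite /inside; apply/negP => /andP[]; lia.
Qed.

Lemma count_inside_split a x b s : a < x < b -> x \notin s ->
  count (inside a b) s = count (inside a x) s + count (inside x b) s.
Proof.
move=> hx; elim: s => //= v s IH; rewrite inE negb_or => /andP[hv /IH ->].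
rewrite /inside; case: (ltngtP v x) hv => //= hvx _; lia.
Qed.

Lemma sum_nth_count (P : pred nat) s :
  \sum_(j < size s) P (nth 0 s j) = count P s.
Proof. by elim: s => [|v s IH]; rewrite ?big_ord0 // big_ord_recl IH. Qed.

Lemma head_rev (T : Type) (m : T) l : head m (rev l) = last m l.
Proof. by case/lastP: l => // l a; rewrite rev_rcons last_rcons. Qed.

Lemma last_rev (T : Type) (m : T) l : last m (rev l) = head m l.
Proof. by rewrite -head_rev revK. Qed.

Fixpoint occ13_2 (s : seq nat) : nat :=
  if s is c :: s' then count (inside c (head 0 s')) (behead s') + occ13_2 s'
  else 0.

Lemma occ13_2_cons c s :
  occ13_2 (c :: s) = count (inside c (head 0 s)) (behead s) + occ13_2 s.
Proof. by []. Qed.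

Lemma occ13_2_cons_desc c s : head 0 s <= c -> occ13_2 (c :: s) = occ13_2 s.
Proof. by move=> hs; rewrite /= count_inside0. Qed.

Lemma occ13_2_catl L a M1 M2 : perm_eq M1 M2 ->
  occ13_2 (a :: M1) = occ13_2 (a :: M2) ->
  occ13_2 (L ++ a :: M1) = occ13_2 (L ++ a :: M2).
Proof.
move=> hM ha; elim: L => //= c L ->; congr (_ + _).
by case: L => [|d L] /=; apply/permP; rewrite ?perm_cat2l ?perm_cons.
Qed.

Lemma occ13_2_insert x u U W : all (fun v => v < x) (u :: U) ->
  x < head x.+1 W -> x \notin W ->
  occ13_2 (u :: U ++ W) = occ13_2 (u :: U ++ x :: W).
Proof.
move=> hU hW hxW; elim: U u hU => [|u' U IH] u /andP[hu hU].
- case: W hW hxW => [|w W] //= hw; rewrite inE negb_or => /andP[_ hxW].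
  rewrite {3}/inside [w < x]ltnNge (ltnW hw) andbF add0n [RHS]addnA.
  by rewrite -count_inside_split ?hu.
- rewrite !cat_cons [LHS]occ13_2_cons [RHS]occ13_2_cons IH //; congr (_ + _).
  case/andP: hU => hu' _; rewrite /= !count_cat /=.
  by rewrite /inside [x < u']ltnNge (ltnW hu') andbF.
Qed.

Lemma occ13_2_jump x U W : all (fun v => v < x) U ->
  x < head x.+1 W -> x \notin W ->
  occ13_2 (x :: U ++ W) = occ13_2 (U ++ x :: W).
Proof.
case: U => [//|u U] hU hW hxW.
rewrite occ13_2_cons_desc; first exact: occ13_2_insert.
by case/andP: hU => /ltnW.
Qed.

(* An empty [L] or [W] reads as the sentinel x.+1 (standing for a_0, a_{n+1}). *)
Variant slide (x : nat) : seq nat -> seq nat -> Prop :=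
  Slide L U W of x < last x.+1 L & all (fun u => u < x) U & x < head x.+1 W
    & x \notin L & x \notin W : slide x (L ++ x :: U ++ W) (L ++ U ++ x :: W).

Lemma slide_rev x A B : slide x A B -> slide x (rev B) (rev A).
Proof.
case=> L U W hL hU hW hxL hxW.
rewrite !rev_cat !rev_cons -!cats1 -!catA /= rev_cat -catA.
by constructor; rewrite ?last_rev ?head_rev ?all_rev ?mem_rev.
Qed.

Lemma slide_perm x A B : slide x A B -> perm_eq A B.
Proof. by case=> L U W *; rewrite perm_cat2l -cat1s perm_catCA. Qed.

Lemma occ13_2_slide x A B : slide x A B -> occ13_2 A = occ13_2 B.
Proof.
case=> L U W + hU hW _ hxW; case/lastP: L => [_|L l]; first exact: occ13_2_jump.
rewrite last_rcons !cat_rcons => hl; apply: occ13_2_catl.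
  by rewrite -cat1s perm_catCA.
have hUx : head 0 (U ++ x :: W) <= x by case: U hU => //= u U /andP[/ltnW].
rewrite [LHS]occ13_2_cons_desc ?[RHS]occ13_2_cons_desc ?occ13_2_jump //.
- exact: leq_trans hUx (ltnW hl).
- exact: ltnW.
Qed.

Lemma stat_13_2_cons c s :
  stat_13_2 (c :: s) = count (inside c (head 0 s)) (behead s) + stat_13_2 s.
Proof.
have -> : count (inside c (head 0 s)) (behead s) =
    \sum_(j < size s) ((0 < j) && (c < nth 0 s j) && (nth 0 s j < nth 0 s 0)).
  by case: s => [|d s]; rewrite ?big_ord0 // big_ord_recl -sum_nth_count.
rewrite /stat_13_2 /= big_ord_recl big_ord0 add0n -big_split /=.
apply: eq_bigr => j _; rewrite big_ord_recl add0n.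
case: (nat_of_ord j) => [|j']; first by rewrite !big_ord0.
by rewrite big_ord_recl [in RHS]big_ord_recl.
Qed.

Lemma stat_13_2_occ s : stat_13_2 s = occ13_2 s.
Proof.
elim: s => [|c s IH]; first by rewrite /stat_13_2 big_ord0.
by rewrite stat_13_2_cons IH.
Qed.

Lemma stat_2_31_rcons2 s c d :
  stat_2_31 (rcons (rcons s c) d) = count (inside d c) s + stat_2_31 (rcons s c).
Proof.
set w := rcons s c.
have nth_w k : k <= size s -> nth 0 (rcons w d) k = nth 0 w k.
  by move=> hk; rewrite nth_rcons size_rcons ltnS hk.
have nth_s k : k < size s -> nth 0 w k = nth 0 s k.
  by move=> hk; rewrite nth_rcons hk.
have nth_d : nth 0 (rcons w d) (size s).+1 = d.
  by rewrite (nth_rcons 0 w d) size_rcons ltnn eqxx.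
have nth_c : nth 0 w (size s) = c by rewrite (nth_rcons 0 s c) ltnn eqxx.
rewrite /stat_2_31 !size_rcons [LHS]big_ord_recr /=.
rewrite [X in _ + X]big1 => [|i _]; last by rewrite ltnn.
rewrite big_ord_recr [in RHS]big_ord_recr /= ltnn.
rewrite [X in _ = _ + (_ + X)]big1 // !addn0 addnC; congr (_ + _).
- rewrite -sum_nth_count; apply: eq_bigr => i _.
  rewrite ltnSn nth_d !nth_w // ?nth_c ?nth_s //; exact: ltnW.
- apply: eq_bigr => j _; apply: eq_bigr => i _.
  have hj := ltn_ord j; have hij := ltn_ord i.
  by rewrite !nth_w ?ltnS //; lia.
Qed.

Lemma stat_2_31_occ s : stat_2_31 s = occ13_2 (rev s).
Proof.
elim/last_ind: s => [|s d IH]; first by rewrite /stat_2_31 big_ord0.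
case/lastP: s IH => [|s c] IH.
  by rewrite /stat_2_31 big_ord_recl !big_ord0.
by rewrite stat_2_31_rcons2 IH !rev_rcons [RHS]occ13_2_cons count_rev.
Qed.

Lemma slide_stats x A B : slide x A B ->
  stat_2_31 A = stat_2_31 B /\ stat_13_2 A = stat_13_2 B.
Proof.
move=> hAB; rewrite !stat_2_31_occ !stat_13_2_occ (occ13_2_slide hAB).
by rewrite (occ13_2_slide (slide_rev hAB)).
Qed.

Lemma insR_split x p r : p < x -> x \notin r -> exists U W,
  [/\ r = U ++ W, insR x p r = U ++ x :: W,
      all (fun u => u < x) U & x < head x.+1 W].
Proof.
elim: r p => [|y r IH] p hp; first by exists [::], [::].
rewrite inE negb_or => /andP[hyx hx] /=; rewrite hp /=.
case: (ltnP x y) => hxy; first by exists [::], (y :: r).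
have hy : y < x by rewrite ltn_neqAle eq_sym hyx hxy.
have [U [W [-> -> hU hW]]] := IH y hy hx.
by exists (y :: U), W; rewrite /= hy.
Qed.

Lemma ins_first_split x m r : x < m -> head m r < x -> x \notin r -> exists U W,
  [/\ r = U ++ W, ins_first x r = U ++ x :: W,
      all (fun u => u < x) U & x < head x.+1 W].
Proof.
case: r => [|y r] /= hm hy; first by move: (ltn_trans hm hy); rewrite ltnn.
rewrite inE negb_or => /andP[_ hx].
have [U [W [-> -> hU hW]]] := insR_split hy hx.
by exists (y :: U), W; rewrite /= hy.
Qed.

Lemma slide_ins_first x m l r : x < m -> x < last m l -> head m r < x ->
  x \notin l -> x \notin r -> slide x (l ++ x :: r) (l ++ ins_first x r).
Proof.
move=> hm hl hr hxl hxr.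
have [U [W [er -> hU hW]]] := ins_first_split hm hr hxr.
rewrite er; constructor => //; first by case: l hl {hxl}.
by move: hxr; rewrite er mem_cat negb_or => /andP[].
Qed.

Lemma slide_rev_ins_first x m l r : x < m -> last m l < x -> x < head m r ->
  x \notin l -> x \notin r ->
  slide x (rev (ins_first x (rev l)) ++ r) (l ++ x :: r).
Proof.
move=> hm hl hr hxl hxr; rewrite -mem_rev in hxl; rewrite -head_rev in hl.
have [U [W [el -> hU hW]]] := ins_first_split hm hl hxl.
rewrite -[l]revK el !rev_cat rev_cons -cats1 -!catA /=.
constructor; rewrite ?last_rev ?all_rev ?mem_rev //; first by case: r hr {hxr}.
by move: hxl; rewrite el mem_cat negb_or => /andP[].
Qed.

Lemma phi'_cases x s : uniq s -> x \in s -> x <= size s ->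
  [\/ phi' x s = s, slide x s (phi' x s) | slide x (phi' x s) s].
Proof.
move=> + hxs; rewrite /phi' /=; case/path.splitP: hxs => l r.
rewrite !cat_rcons; set m := (size _).+1.
have -> : (if l is [::] then m else last 0 l) = last m l by clearbody m; case: l.
rewrite uniq_catC /= mem_cat negb_or => /andP[/andP[hxr hxl] _] hx.
have hm : x < m by rewrite ltnS.
case: ifP => [/andP[hl hr] | _].
  by constructor 2; apply: slide_ins_first hm _ _ _ _.
case: ifP => [/andP[hl hr] | _]; last by constructor 1.
by constructor 3; apply: slide_rev_ins_first hm _ _ _ _.
Qed.

Lemma phi'_invariants n x s : is_perm n s -> 1 <= x <= n ->
  [/\ is_perm n (phi' x s), stat_2_31 (phi' x s) = stat_2_31 s
    & stat_13_2 (phi' x s) = stat_13_2 s].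
Proof.
move=> hs hx; have hu : uniq s by rewrite (perm_uniq hs) iota_uniq.
have hxs : x \in s by rewrite (perm_mem hs) mem_iota add1n ltnS.
have hsz : x <= size s by rewrite (perm_size hs) size_iota; case/andP: hx.
have [-> //|hslide|hslide] := phi'_cases hu hxs hsz.
- have [<- <-] := slide_stats hslide.
  by split=> //; apply: perm_trans hs; rewrite perm_sym (slide_perm hslide).
- have [-> ->] := slide_stats hslide.
  by split=> //; apply: perm_trans (slide_perm hslide) hs.
Qed.

Theorem theorem5p1 (n : nat) (s t : seq nat) :
  is_perm n s -> fs_orbit n s t ->
  stat_2_31 t = stat_2_31 s /\ stat_13_2 t = stat_13_2 s.
Proof.
move=> hs ho; suff [_ -> ->] : [/\ is_perm n t, stat_2_31 t = stat_2_31 s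
  & stat_13_2 t = stat_13_2 s] by [].
elim: ho hs => // s0 t0 x hx _ IH /IH [ht <- <-].
exact: phi'_invariants ht hx.
Qed.
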